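(* Let $d=\mu_+-\mu_-$. For every $\epsilon\in[0,d/4]$ and every $K\in(1,\bar B_K(\epsilon)]$, where $$\bar B_K(\epsilon)=\min\left\{\exp\!\left(\frac{(d-2\epsilon)^2}{2}\right),\ \phi^{-1}\!\left(\frac{d}{\epsilon}-2\right)\right\}$$ (with $\phi^{-1}(+\infty):=+\infty$ when $\epsilon=0$), and $\phi^{-1}$ is the inverse of the bijection $\phi:[1,+\infty)\to[2,+\infty)$, $\phi(x)=x+1/x$, one has $$R^{\epsilon}_{\mathrm{bdy}}(\theta_{\mathrm f})\;\ge\;R^{\epsilon}_{\mathrm{bdy}}(\theta^* )\;\ge\;R^{\epsilon}_{\mathrm{bdy}}(\theta^{(\epsilon)}_{\mathrm r}).$$
   Context: Setting (one-dimensional Gaussian mixture). Fix real numbers $\mu_-<\mu_+$ and $K>1$, and let $d=\mu_+-\mu_-$. Let $(X,Y)$ be a random pair with $\Pr(Y=1)=\Pr(Y=-1)=\tfrac12$, $X\mid Y=-1\sim\mathcal N(\mu_-,1)$, and $X\mid Y=1\sim\mathcal N(\mu_+,K^2)$. For $\theta\in\mathbb R$, $f_\theta(x)=1$ if $x>\theta$ and $f_\theta(x)=-1$ otherwise. Class-conditional errors: $e_+(\theta)=\Pr(X\le\theta\mid Y=1)$, $e_-(\theta)=\Pr(X>\theta\mid Y=-1)$. Natural error: $R_{\mathrm{nat}}(\theta)=\tfrac12 e_+(\theta)+\tfrac12 e_-(\theta)$. For $\epsilon\ge0$, robust error: $R_{\mathrm{rob}}^{\epsilon}(\theta)=\tfrac12\Pr(X\le\theta+\epsilon\mid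 Y=1)+\tfrac12\Pr(X>\theta-\epsilon\mid Y=-1)$; boundary error: $R^{\epsilon}_{\mathrm{bdy}}(\theta)=\Pr(\exists\tau,\ |\tau|\le\epsilon,\ f_\theta(X+\tau)\ne f_\theta(X),\ f_\theta(X)=Y)=\tfrac12\Pr(\theta<X\le\theta+\epsilon\mid Y=1)+\tfrac12\Pr(\theta-\epsilon<X\le\theta\mid Y=-1)$. Optimal models: $\theta^*$ minimizes $R_{\mathrm{nat}}$ over $[\mu_-,\mu_+]$; $\theta_{\mathrm f}$ is the threshold in $[\mu_-,\mu_+]$ with $e_+(\theta_{\mathrm f})=e_-(\theta_{\mathrm f})$; $\theta^{(\epsilon)}_{\mathrm r}$ minimizes $R^{\epsilon}_{\mathrm{rob}}$ over $[\mu_-,\mu_+]$. *)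

From Stdlib Require Import Reals.
From Coquelicot Require Import Coquelicot.
Open Scope R_scope.

Definition gauss_pdf (t : R) : R := exp (- t ^ 2 / 2) / sqrt (2 * PI).
Definition Phi (x : R) : R :=
  RInt_gen gauss_pdf (Rbar_locally m_infty) (at_point x).

Definition normal_cdf (m s t : R) : R := Phi ((t - m) / s).

Section Model.
(* X | Y=-1 ~ N(mum,1), X | Y=1 ~ N(mup,K^2) *)
Variables (mum mup K : R).

Definition e_plus (th : R) : R := normal_cdf mup K th.
Definition e_minus (th : R) : R := 1 - normal_cdf mum 1 th.

Definition R_nat (th : R) : R := / 2 * e_plus th + / 2 * e_minus th.

Definition R_rob (eps th : R) : R :=
  / 2 * normal_cdf mup K (th + eps) + / 2 * (1 - normal_cdf mum 1 (th - eps)).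

Definition R_bdy (eps th : R) : R :=
  / 2 * (normal_cdf mup K (th + eps) - normal_cdf mup K th)
  + / 2 * (normal_cdf mum 1 th - normal_cdf mum 1 (th - eps)).

Definition is_theta_star (th : R) : Prop :=
  mum <= th <= mup /\ forall t, mum <= t <= mup -> R_nat th <= R_nat t.

Definition is_theta_f (th : R) : Prop :=
  mum <= th <= mup /\ e_plus th = e_minus th.

Definition is_theta_r (eps th : R) : Prop :=
  mum <= th <= mup /\ forall t, mum <= t <= mup -> R_rob eps th <= R_rob eps t.
End Model.

Definition phi (x : R) : R := x + / x.
Definition phi_inv (y : R) : R := (y + sqrt (y ^ 2 - 4)) / 2.

(* K <= Bbar_K(eps) = min{ exp((d-2eps)^2/2), phi^{-1}(d/eps - 2) },
   with phi^{-1}(+oo) = +oo when eps = 0. *)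
Definition K_le_Bbar (d eps K : R) : Prop :=
  K <= exp ((d - 2 * eps) ^ 2 / 2) /\
  (eps = 0 \/ K <= phi_inv (d / eps - 2)).

From Stdlib Require Import Reals Lra Psatz.
From Coquelicot Require Import Coquelicot.
Open Scope R_scope.

(* The Gaussian integral, in the form (int_0^x e^(-t^2/2) dt)^2
   + 2 int_0^1 e^(-x^2(1+t^2)/2)/(1+t^2) dt = pi/2 (the derivative vanishes), gives
   Phi' = gauss_pdf and Phi(-x) = 1 - Phi(x).  Then R_nat' has the sign of the log-likelihood
   ratio ((t - mum)^2 - ((t - mup)/K)^2)/2 - ln K, which is nondecreasing on [mum, mup].
   Since (1 + K)(theta_f - mum) = mup - mum, the ratio equals -ln K < 0 at theta_f, so
   theta_f <= theta_star and the ratio stays nonpositive on [theta_f, theta_star).  There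
   R_bdy' <= 0: shifting a Gaussian density by eps multiplies it by an explicit exponential,
   and eps (K + 1)^2 <= (mup - mum) K, i.e. K <= phi_inv ((mup - mum)/eps - 2), makes the
   factor of the class -1 dominate.  The second inequality is R_bdy = R_rob - R_nat together
   with the optimality of theta_r and theta_star. *)

Lemma continuous_of_ex_derive (f : R -> R) x : ex_derive f x -> continuous f x.
Proof. apply (ex_derive_continuous (V := R_NormedModule)). Qed.

Lemma ex_RInt_of_continuous (f : R -> R) a b :
  (forall x, continuous f x) -> ex_RInt f a b.
Proof. intros Hf; apply (ex_RInt_continuous (V := R_CompleteNormedModule)); auto. Qed.

Lemma is_derive_Rplus (f g : R -> R) x df dg :
  is_derive f x df -> is_derive g x dg -> is_derive (fun t => f t + g t) x (df + dg).
Proof. apply (is_derive_plus (V := R_NormedModule)). Qed.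

Lemma is_derive_Rminus (f g : R -> R) x df dg :
  is_derive f x df -> is_derive g x dg -> is_derive (fun t => f t - g t) x (df - dg).
Proof. apply (is_derive_minus (V := R_NormedModule)). Qed.

Lemma exp_le_compat a b : a <= b -> exp a <= exp b.
Proof. intros [H | ->]; [left; apply exp_increasing, H | right; reflexivity]. Qed.

Lemma exp_sub1_mul_le q X Y : 0 < q <= 1 -> 0 <= X -> Y <= X -> q * (exp Y - 1) <= exp X - 1.
Proof.
  intros Hq HX HYX.
  assert (1 <= exp X) by (rewrite <- exp_0; apply exp_le_compat, HX).
  assert (exp Y <= exp X) by (apply exp_le_compat, HYX).
  destruct (Rle_dec (exp Y) 1); nra.
Qed.

Lemma mvt_is_derive (f df : R -> R) a b : a < b ->
  (forall x, a <= x <= b -> is_derive f x (df x)) ->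
  exists c, a < c < b /\ f b - f a = df c * (b - a).
Proof.
  intros Hab Hf; destruct (MVT_cor2 f df a b Hab) as [c [Hc Hc']].
  - intros c Hc; apply is_derive_Reals, Hf, Hc.
  - exists c; split; assumption.
Qed.

Lemma Rlt_of_derive_pos (f df : R -> R) a b : a < b ->
  (forall x, a <= x <= b -> is_derive f x (df x)) ->
  (forall x, a < x < b -> 0 < df x) -> f a < f b.
Proof.
  intros Hab Hf Hdf; destruct (mvt_is_derive f df a b Hab Hf) as [c [Hc Hfc]].
  specialize (Hdf c Hc); nra.
Qed.

Lemma Rlt_of_derive_neg (f df : R -> R) a b : a < b ->
  (forall x, a <= x <= b -> is_derive f x (df x)) ->
  (forall x, a < x < b -> df x < 0) -> f b < f a.
Proof.
  intros Hab Hf Hdf; destruct (mvt_is_derive f df a b Hab Hf) as [c [Hc Hfc]].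
  specialize (Hdf c Hc); nra.
Qed.

Lemma Rle_of_derive_nonpos (f df : R -> R) a b : a <= b ->
  (forall x, a <= x <= b -> is_derive f x (df x)) ->
  (forall x, a < x < b -> df x <= 0) -> f b <= f a.
Proof.
  intros [Hab | ->] Hf Hdf; [| lra].
  destruct (mvt_is_derive f df a b Hab Hf) as [c [Hc Hfc]].
  specialize (Hdf c Hc); nra.
Qed.

Lemma phi_le_of_le_phi_inv x y : 1 <= x -> x <= phi_inv y -> phi x <= y.
Proof.
  unfold phi, phi_inv; intros Hx Hxy.
  apply Rmult_le_reg_l with x; [lra |].
  rewrite Rmult_plus_distr_l, Rinv_r by lra.
  destruct (Rle_dec (y ^ 2 - 4) 0) as [Hy | Hy].
  - rewrite sqrt_neg_0 in Hxy by exact Hy; nra.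
  - pose proof (sqrt_pos (y ^ 2 - 4)).
    pose proof (pow2_sqrt (y ^ 2 - 4) ltac:(lra)).
    destruct (Rle_dec (2 * x) y); nra.
Qed.

Lemma eps_sqr_le_of_le_phi_inv d eps K : 0 < d -> 0 <= eps -> 1 < K ->
  (eps = 0 \/ K <= phi_inv (d / eps - 2)) -> eps * (K + 1) ^ 2 <= d * K.
Proof.
  intros Hd He HK [-> | Hphi]; [nra |].
  destruct He as [He | <-]; [| nra].
  apply phi_le_of_le_phi_inv in Hphi; [unfold phi in Hphi | lra].
  replace (eps * (K + 1) ^ 2) with (eps * K * (K + / K + 2)) by (field; lra).
  replace (d * K) with (eps * K * (d / eps)) by (field; lra).
  apply Rmult_le_compat_l; nra.
Qed.

Definition gauss (t : R) : R := exp (- t ^ 2 / 2).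

Lemma continuous_gauss t : continuous gauss t.
Proof. apply continuous_of_ex_derive; unfold gauss; auto_derive; exact I. Qed.

Definition gauss_int (x : R) : R := RInt gauss 0 x.

Lemma gauss_int_0 : gauss_int 0 = 0.
Proof. apply (RInt_point (V := R_CompleteNormedModule)). Qed.

Lemma is_derive_gauss_int x : is_derive gauss_int x (gauss x).
Proof.
  apply is_derive_RInt with 0; [| apply continuous_gauss].
  apply filter_forall; intros y; apply (RInt_correct (V := R_CompleteNormedModule)).
  apply ex_RInt_of_continuous, continuous_gauss.
Qed.

Lemma gauss_int_lt x y : x < y -> gauss_int x < gauss_int y.
Proof.
  intros Hxy; apply (incr_function _ m_infty p_infty gauss); try easy.
  - intros; apply is_derive_gauss_int.
  - intros; apply exp_pos.
Qed.

Lemma gauss_int_opp x : gauss_int (- x) = - gauss_int x.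
Proof.
  unfold gauss_int.
  assert (H := is_RInt_comp_opp gauss 0 x _
    (RInt_correct (V := R_CompleteNormedModule) gauss (- 0) (- x)
       (ex_RInt_of_continuous _ _ _ continuous_gauss))).
  rewrite Ropp_0 in H.
  rewrite <- (is_RInt_unique _ _ _ _ H).
  rewrite (RInt_ext _ (fun y => opp (gauss y))), (RInt_opp (V := R_CompleteNormedModule)); [reflexivity | |].
  - apply ex_RInt_of_continuous, continuous_gauss.
  - intros t _; unfold gauss; do 4 f_equal; ring.
Qed.

Definition gauss_param (u t : R) : R := exp (- u ^ 2 * (1 + t ^ 2) / 2) / (1 + t ^ 2).

Definition gauss_param_int (u : R) : R := RInt (gauss_param u) 0 1.

Lemma continuous_gauss_param u t : continuous (gauss_param u) t.
Proof. apply continuous_of_ex_derive; unfold gauss_param; auto_derive; nra. Qed.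

Lemma is_derive_gauss_param u t :
  is_derive (fun z => gauss_param z t) u (- gauss u * (u * gauss (u * t))).
Proof.
  unfold gauss_param, gauss; auto_derive; [nra |].
  replace (- (u * (u * 1)) * (1 + t * (t * 1)) * / 2) with (- u ^ 2 * (1 + t ^ 2) / 2) by field.
  replace (- (u * t) ^ 2 / 2) with (- u ^ 2 * (1 + t ^ 2) / 2 - - u ^ 2 / 2) by field.
  unfold Rminus; rewrite exp_plus, exp_Ropp; field.
  split; [apply Rgt_not_eq, exp_pos | nra].
Qed.

Lemma is_derive_gauss_param_int x :
  is_derive gauss_param_int x (- gauss x * gauss_int x).
Proof.
  assert (Hd : forall u t, Derive (fun z => gauss_param z t) u = - gauss u * (u * gauss (u * t)))
    by (intros; apply is_derive_unique, is_derive_gauss_param).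
  replace (- gauss x * gauss_int x) with (RInt (fun t => Derive (fun u => gauss_param u t) x) 0 1).
  - apply is_derive_RInt_param.
    + apply filter_forall; intros y t _; eexists; apply is_derive_gauss_param.
    + intros t _; apply continuity_2d_pt_ext with (fun u v => - gauss u * (u * gauss (u * v))).
      { intros; rewrite Hd; reflexivity. }
      unfold gauss; repeat first
        [ apply continuity_2d_pt_mult | apply continuity_2d_pt_plus | apply continuity_2d_pt_opp
        | apply continuity_2d_pt_id1 | apply continuity_2d_pt_id2 | apply continuity_2d_pt_const
        | apply continuity_1d_2d_pt_comp; [apply derivable_continuous_pt, derivable_pt_exp |] ].
    + apply filter_forall; intros; apply ex_RInt_of_continuous, continuous_gauss_param.
  - rewrite (RInt_ext _ (fun t => scal (- gauss x) (scal x (gauss (x * t + 0)))))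
      by (intros; rewrite Hd, Rplus_0_r; reflexivity).
    rewrite (RInt_scal (V := R_CompleteNormedModule)), (RInt_comp_lin (V := R_CompleteNormedModule)).
    + unfold gauss_int; rewrite Rmult_0_r, Rmult_1_r, !Rplus_0_r; reflexivity.
    + apply ex_RInt_of_continuous, continuous_gauss.
    + apply (ex_RInt_comp_lin (V := R_CompleteNormedModule)), ex_RInt_of_continuous, continuous_gauss.
Qed.

Lemma gauss_param_int_0 : gauss_param_int 0 = PI / 4.
Proof.
  unfold gauss_param_int.
  rewrite (RInt_ext (V := R_CompleteNormedModule) _ (fun t => / (1 + t ^ 2))).
  2: { intros t _; unfold gauss_param.
       replace (- 0 ^ 2 * (1 + t ^ 2) / 2) with 0 by field; rewrite exp_0; change (1 / (1 + t ^ 2) = / (1 + t ^ 2)); field; nra. }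
  assert (H : is_RInt (fun t => / (1 + t ^ 2)) 0 1 (atan 1 - atan 0)).
  { apply (is_RInt_derive (V := R_CompleteNormedModule)).
    - intros; apply is_derive_Reals, derivable_pt_lim_atan.
    - intros; apply continuous_of_ex_derive; auto_derive; nra. }
  rewrite (is_RInt_unique _ _ _ _ H), atan_1, atan_0; field.
Qed.

Lemma gauss_param_int_bounds x : 0 <= gauss_param_int x <= gauss x.
Proof.
  assert (Hex : ex_RInt (gauss_param x) 0 1)
    by (apply ex_RInt_of_continuous, continuous_gauss_param).
  unfold gauss_param_int, gauss_param; split.
  - apply RInt_ge_0; [lra | exact Hex |].
    intros t _; apply Rlt_le, Rdiv_lt_0_compat; [apply exp_pos | nra].
  - replace (gauss x) with (RInt (fun _ => gauss x) 0 1)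
      by (rewrite RInt_const; unfold scal; simpl; unfold mult; simpl; ring).
    apply RInt_le; [lra | exact Hex | apply ex_RInt_const |].
    intros t Ht; unfold gauss.
    apply Rmult_le_reg_r with (1 + t ^ 2); [nra |].
    unfold Rdiv; rewrite Rmult_assoc, Rinv_l by nra.
    assert (exp (- x ^ 2 * (1 + t ^ 2) / 2) <= exp (- x ^ 2 / 2)) by (apply exp_le_compat; nra).
    assert (0 < exp (- x ^ 2 / 2)) by apply exp_pos.
    nra.
Qed.

Lemma gauss_int_sqr_add x : gauss_int x ^ 2 + 2 * gauss_param_int x = PI / 2.
Proof.
  set (h := fun x => gauss_int x ^ 2 + 2 * gauss_param_int x).
  assert (Hd : forall t, is_derive h t 0).
  { intros t.
    replace 0 with (INR 2 * gauss t * gauss_int t ^ 1 + 2 * (- gauss t * gauss_int t))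
      by (simpl; ring).
    apply is_derive_Rplus; [apply is_derive_pow | apply is_derive_scal].
    - apply is_derive_gauss_int.
    - apply is_derive_gauss_param_int. }
  assert (Hh0 : h 0 = PI / 2).
  { unfold h; rewrite gauss_int_0, gauss_param_int_0; field. }
  change (h x = PI / 2); rewrite <- Hh0.
  destruct (Rtotal_order x 0) as [Hx | [-> | Hx]]; [| reflexivity |].
  - apply (eq_is_derive h); [intros; apply Hd | exact Hx].
  - symmetry; apply (eq_is_derive h); [intros; apply Hd | exact Hx].
Qed.

Lemma is_lim_gauss : is_lim gauss m_infty 0.
Proof.
  apply is_lim_le_le_loc with (fun _ => 0) exp; [| apply is_lim_const | apply is_lim_exp_m].
  exists (-2); intros x Hx; split; [apply Rlt_le, exp_pos | apply exp_le_compat; nra].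
Qed.

Lemma is_lim_gauss_param_int : is_lim gauss_param_int m_infty 0.
Proof.
  apply is_lim_le_le_loc with (fun _ => 0) gauss; [| apply is_lim_const | apply is_lim_gauss].
  exists 0; intros x _; apply gauss_param_int_bounds.
Qed.

Lemma gauss_int_nonpos x : x <= 0 -> gauss_int x = - sqrt (PI / 2 - 2 * gauss_param_int x).
Proof.
  intros Hx.
  assert (Hneg : gauss_int x <= 0).
  { rewrite <- gauss_int_0; destruct Hx as [Hx | ->]; [left; apply gauss_int_lt, Hx | right; reflexivity]. }
  rewrite <- (gauss_int_sqr_add x).
  replace (gauss_int x ^ 2 + 2 * gauss_param_int x - 2 * gauss_param_int x) with ((- gauss_int x) ^ 2) by ring.
  rewrite sqrt_pow2 by lra; ring.
Qed.

Lemma is_lim_gauss_int : is_lim gauss_int m_infty (- sqrt (PI / 2)).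
Proof.
  set (g := fun j => - sqrt (PI / 2 - 2 * j)).
  replace (- sqrt (PI / 2)) with (g 0) by (unfold g; rewrite Rmult_0_r, Rminus_0_r; reflexivity).
  apply is_lim_ext_loc with (fun x => g (gauss_param_int x)).
  - exists 0; intros x Hx; symmetry; apply gauss_int_nonpos; lra.
  - apply is_lim_comp_continuous; [apply is_lim_gauss_param_int |].
    apply continuous_of_ex_derive; unfold g; auto_derive.
    pose proof PI_RGT_0; lra.
Qed.

Lemma sqrt_2PI_gt0 : 0 < sqrt (2 * PI).
Proof. apply sqrt_lt_R0; pose proof PI_RGT_0; lra. Qed.

Lemma is_derive_gauss_int_div t :
  is_derive (fun t => gauss_int t / sqrt (2 * PI)) t (gauss_pdf t).
Proof.
  pose proof sqrt_2PI_gt0.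
  replace (gauss_pdf t) with (/ sqrt (2 * PI) * gauss t) by (unfold gauss_pdf, gauss; field; lra).
  apply (is_derive_ext (fun t => / sqrt (2 * PI) * gauss_int t)); [intros; apply Rmult_comm |].
  apply is_derive_scal, is_derive_gauss_int.
Qed.

Lemma Phi_eq x : Phi x = / 2 + gauss_int x / sqrt (2 * PI).
Proof.
  pose proof sqrt_2PI_gt0 as Hs.
  set (F := fun t => gauss_int t / sqrt (2 * PI)).
  assert (HF : forall t, is_derive F t (gauss_pdf t)) by apply is_derive_gauss_int_div.
  assert (H : is_RInt_gen gauss_pdf (Rbar_locally m_infty) (at_point x)
                (F x - - sqrt (PI / 2) / sqrt (2 * PI))).
  { apply is_RInt_gen_ext with (Derive F).
    { apply filter_forall; intros; apply is_derive_unique, HF. }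
    apply is_RInt_gen_Derive.
    - apply filter_forall; intros; eexists; apply HF.
    - apply filter_forall; intros ab t _.
      apply (continuous_ext gauss_pdf); [intros; symmetry; apply is_derive_unique, HF |].
      apply continuous_of_ex_derive; unfold gauss_pdf; auto_derive; exact I.
    - apply (is_lim_scal_r gauss_int (/ sqrt (2 * PI)) m_infty (- sqrt (PI / 2))), is_lim_gauss_int.
    - intros P HP; unfold filtermap, at_point; apply locally_singleton, HP. }
  assert (Hhalf : sqrt (2 * PI) = 2 * sqrt (PI / 2)).
  { replace (2 * PI) with (2 ^ 2 * (PI / 2)) by field.
    rewrite sqrt_mult, sqrt_pow2; pose proof PI_RGT_0; lra. }
  unfold Phi; rewrite (is_RInt_gen_unique _ _ H); unfold F; rewrite Hhalf; field; lra.
Qed.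

Lemma is_derive_Phi x : is_derive Phi x (gauss_pdf x).
Proof.
  apply (is_derive_ext (fun t => / 2 + gauss_int t / sqrt (2 * PI))); [intros; symmetry; apply Phi_eq |].
  rewrite <- (Rplus_0_l (gauss_pdf x)).
  apply is_derive_Rplus; [apply (is_derive_const (V := R_NormedModule)) | apply is_derive_gauss_int_div].
Qed.

Lemma Phi_opp x : Phi (- x) = 1 - Phi x.
Proof. rewrite !Phi_eq, gauss_int_opp; field; apply Rgt_not_eq, sqrt_2PI_gt0. Qed.

Lemma Phi_inj x y : Phi x = Phi y -> x = y.
Proof.
  assert (Hlt : forall x y, x < y -> Phi x < Phi y).
  { intros a b Hab; rewrite !Phi_eq.
    apply Rplus_lt_compat_l, Rmult_lt_compat_r;
      [apply Rinv_0_lt_compat, sqrt_2PI_gt0 | apply gauss_int_lt, Hab]. }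
  intros Hxy; destruct (Rtotal_order x y) as [H | [H | H]]; [apply Hlt in H | | apply Hlt in H]; lra.
Qed.

Definition normal_pdf (m s t : R) : R := gauss_pdf ((t - m) / s) / s.

Lemma normal_pdf_gt0 m s t : 0 < s -> 0 < normal_pdf m s t.
Proof.
  intros Hs; apply Rdiv_lt_0_compat; [apply Rdiv_lt_0_compat; [apply exp_pos | apply sqrt_2PI_gt0] | exact Hs].
Qed.

Lemma is_derive_normal_cdf m s t : s <> 0 -> is_derive (normal_cdf m s) t (normal_pdf m s t).
Proof.
  intros Hs; unfold normal_cdf, normal_pdf.
  replace (gauss_pdf ((t - m) / s) / s) with (/ s * gauss_pdf ((t - m) / s)) by apply Rmult_comm.
  apply (is_derive_comp Phi (fun t => (t - m) / s)); [apply is_derive_Phi |].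
  auto_derive; [exact I | field; exact Hs].
Qed.

Lemma normal_cdf_shift m s t h : normal_cdf m s (t + h) = normal_cdf (m - h) s t.
Proof. unfold normal_cdf; replace (t + h - m) with (t - (m - h)) by ring; reflexivity. Qed.

Lemma normal_pdf_shift m s t h : s <> 0 ->
  normal_pdf (m - h) s t = normal_pdf m s t * exp (- ((t - m) * h + h ^ 2 / 2) / s ^ 2).
Proof.
  intros Hs; unfold normal_pdf, gauss_pdf.
  replace (- ((t - (m - h)) / s) ^ 2 / 2)
    with (- ((t - m) / s) ^ 2 / 2 + - ((t - m) * h + h ^ 2 / 2) / s ^ 2) by (field; exact Hs).
  rewrite exp_plus; field; split; [apply Rgt_not_eq, sqrt_2PI_gt0 | exact Hs].
Qed.

Section BoundaryError.

Variables mum mup K : R.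
Hypothesis HK : 1 < K.

Definition log_lik_ratio (t : R) : R := ((t - mum) ^ 2 - ((t - mup) / K) ^ 2) / 2 - ln K.

Lemma normal_pdf_ratio t : normal_pdf mup K t = normal_pdf mum 1 t * exp (log_lik_ratio t).
Proof.
  unfold normal_pdf, gauss_pdf, log_lik_ratio.
  replace (- ((t - mup) / K) ^ 2 / 2)
    with (- ((t - mum) / 1) ^ 2 / 2 + (((t - mum) ^ 2 - ((t - mup) / K) ^ 2) / 2 - ln K) + ln K)
    by (field; lra).
  rewrite !exp_plus, exp_ln by lra.
  field; split; [apply Rgt_not_eq, sqrt_2PI_gt0 | lra].
Qed.

Lemma log_lik_ratio_le s t : mum <= s -> s <= t -> t <= mup -> log_lik_ratio s <= log_lik_ratio t.
Proof.
  intros Hs Hst Ht; unfold log_lik_ratio.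
  assert (E : (t - mum) ^ 2 - ((t - mup) / K) ^ 2 - ((s - mum) ^ 2 - ((s - mup) / K) ^ 2)
            = (t - s) * ((t + s - 2 * mum) + (2 * mup - t - s) / K ^ 2)) by (field; lra).
  assert (0 <= (2 * mup - t - s) / K ^ 2) by (apply Rdiv_le_0_compat; nra).
  assert (0 <= (t - s) * ((t + s - 2 * mum) + (2 * mup - t - s) / K ^ 2)) by (apply Rmult_le_pos; lra).
  lra.
Qed.

Definition dR_nat (t : R) : R := / 2 * normal_pdf mum 1 t * (exp (log_lik_ratio t) - 1).

Lemma is_derive_R_nat t : is_derive (R_nat mum mup K) t (dR_nat t).
Proof.
  unfold R_nat, e_plus, e_minus, dR_nat.
  replace (/ 2 * normal_pdf mum 1 t * (exp (log_lik_ratio t) - 1))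
    with (/ 2 * normal_pdf mup K t + / 2 * (0 - normal_pdf mum 1 t)) by (rewrite normal_pdf_ratio; ring).
  apply is_derive_Rplus; apply is_derive_scal; [| apply is_derive_Rminus];
    [| apply (is_derive_const (V := R_NormedModule)) |]; apply is_derive_normal_cdf; lra.
Qed.

Definition dR_bdy (eps t : R) : R :=
  / 2 * (normal_pdf (mup - eps) K t - normal_pdf mup K t)
  + / 2 * (normal_pdf mum 1 t - normal_pdf (mum + eps) 1 t).

Lemma is_derive_R_bdy eps t : is_derive (R_bdy mum mup K eps) t (dR_bdy eps t).
Proof.
  apply (is_derive_ext (fun t => / 2 * (normal_cdf (mup - eps) K t - normal_cdf mup K t)
                                + / 2 * (normal_cdf mum 1 t - normal_cdf (mum + eps) 1 t))).
  { intros s; unfold R_bdy; replace (mum + eps) with (mum - - eps) by ring.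
    rewrite <- !normal_cdf_shift; reflexivity. }
  apply is_derive_Rplus; apply is_derive_scal; apply is_derive_Rminus;
    apply is_derive_normal_cdf; lra.
Qed.

Lemma dR_bdy_nonpos eps t : 0 <= eps -> eps * (K + 1) ^ 2 <= (mup - mum) * K ->
  mup - mum <= (1 + K) * (t - mum) -> log_lik_ratio t <= 0 -> dR_bdy eps t <= 0.
Proof.
  intros He Heps Ht Hllr; unfold dR_bdy.
  replace (mum + eps) with (mum - - eps) by ring.
  rewrite !normal_pdf_shift, normal_pdf_ratio by lra.
  set (x := t - mum) in *.
  set (X := - (x * - eps + (- eps) ^ 2 / 2) / 1 ^ 2).
  set (Y := - ((t - mup) * eps + eps ^ 2 / 2) / K ^ 2).
  set (q := exp (log_lik_ratio t)).
  assert (HP : 0 < normal_pdf mum 1 t) by (apply normal_pdf_gt0; lra).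
  (* Now 2 dR_bdy = p (q (e^Y - 1) - (e^X - 1)) with p the class -1 density, q <= 1 the
     likelihood ratio, and X, Y the log-factors of the eps-shifts of the two densities. *)
  assert (Hq : 0 < q <= 1).
  { split; [apply exp_pos |]; unfold q; rewrite <- exp_0; apply exp_le_compat, Hllr. }
  assert (Hex : eps * (K + 1) <= K * x).
  { apply Rmult_le_reg_r with (K + 1); nra. }
  assert (HX : 0 <= X) by (unfold X; nra).
  assert (HYX : Y <= X).
  { assert (HXY : X - Y = eps * ((K ^ 2 + 1) * x - (mup - mum) - eps * (K ^ 2 - 1) / 2) / K ^ 2)
      by (unfold X, Y, x; field; lra).
    assert (0 <= x) by nra.
    assert (eps * (K + 1) * (K - 1) <= K * x * (K - 1)) by (apply Rmult_le_compat_r; lra).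
    assert (0 <= K * x * (K - 1)) by (apply Rmult_le_pos; nra).
    assert (0 <= (K ^ 2 + 1) * x - (mup - mum) - eps * (K ^ 2 - 1) / 2) by nra.
    assert (0 <= eps * ((K ^ 2 + 1) * x - (mup - mum) - eps * (K ^ 2 - 1) / 2) / K ^ 2)
      by (apply Rdiv_le_0_compat; nra).
    lra. }
  pose proof (exp_sub1_mul_le q X Y Hq HX HYX).
  nra.
Qed.

Lemma theta_f_eq th : is_theta_f mum mup K th -> (1 + K) * (th - mum) = mup - mum.
Proof.
  intros [_ Hf]; unfold e_plus, e_minus, normal_cdf in Hf.
  rewrite <- Phi_opp in Hf; apply Phi_inj in Hf.
  assert (E : th - mup = (th - mup) / K * K) by (field; lra).
  rewrite Hf in E; unfold Rdiv in E; rewrite Rinv_1 in E; nra.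
Qed.

Lemma log_lik_ratio_theta_f th : is_theta_f mum mup K th -> log_lik_ratio th < 0.
Proof.
  intros Hf; apply theta_f_eq in Hf; unfold log_lik_ratio.
  assert (E : (th - mup) / K = - (th - mum)).
  { apply Rmult_eq_reg_r with K; [| lra].
    unfold Rdiv; rewrite Rmult_assoc, Rinv_l, Rmult_1_r by lra; nra. }
  rewrite E.
  assert (0 < ln K) by (rewrite <- ln_1; apply ln_increasing; lra).
  lra.
Qed.

Lemma theta_f_le_theta_star tf ts :
  is_theta_f mum mup K tf -> is_theta_star mum mup K ts -> tf <= ts.
Proof.
  intros Hf [Hs Hopt]; apply Rnot_lt_le; intros Hlt.
  assert (R_nat mum mup K tf < R_nat mum mup K ts).
  { apply (Rlt_of_derive_neg _ dR_nat ts tf Hlt); [intros; apply is_derive_R_nat |].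
    intros c Hc.
    assert (log_lik_ratio c < 0).
    { pose proof (log_lik_ratio_theta_f tf Hf); destruct Hf as [[_ Htf] _].
      pose proof (log_lik_ratio_le c tf ltac:(lra) ltac:(lra) Htf); lra. }
    assert (exp (log_lik_ratio c) < 1) by (rewrite <- exp_0; apply exp_increasing; lra).
    assert (0 < normal_pdf mum 1 c) by (apply normal_pdf_gt0; lra).
    unfold dR_nat; nra. }
  pose proof (Hopt tf (proj1 Hf)); lra.
Qed.

Lemma log_lik_ratio_nonpos_before_theta_star ts c :
  is_theta_star mum mup K ts -> mum <= c < ts -> log_lik_ratio c <= 0.
Proof.
  intros [Hs Hopt] Hc; apply Rnot_lt_le; intros Hpos.
  assert (R_nat mum mup K c < R_nat mum mup K ts).
  { apply (Rlt_of_derive_pos _ dR_nat c ts (proj2 Hc)); [intros; apply is_derive_R_nat |].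
    intros c' Hc'.
    pose proof (log_lik_ratio_le c c' ltac:(lra) ltac:(lra) ltac:(lra)).
    assert (1 < exp (log_lik_ratio c')) by (rewrite <- exp_0; apply exp_increasing; lra).
    assert (0 < normal_pdf mum 1 c') by (apply normal_pdf_gt0; lra).
    unfold dR_nat; nra. }
  pose proof (Hopt c ltac:(lra)); lra.
Qed.

Lemma R_bdy_theta_star_le eps tf ts : 0 <= eps -> eps * (K + 1) ^ 2 <= (mup - mum) * K ->
  is_theta_f mum mup K tf -> is_theta_star mum mup K ts ->
  R_bdy mum mup K eps ts <= R_bdy mum mup K eps tf.
Proof.
  intros He Heps Hf Hs.
  apply (Rle_of_derive_nonpos _ (dR_bdy eps)); [apply theta_f_le_theta_star; assumption | |].
  - intros; apply is_derive_R_bdy.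
  - intros c Hc; apply dR_bdy_nonpos; [assumption | assumption | |].
    + pose proof (theta_f_eq tf Hf); nra.
    + apply (log_lik_ratio_nonpos_before_theta_star ts); [assumption |].
      destruct Hf as [[Htf _] _]; lra.
Qed.

End BoundaryError.

Lemma R_bdy_eq mum mup K eps th :
  R_bdy mum mup K eps th = R_rob mum mup K eps th - R_nat mum mup K th.
Proof. unfold R_bdy, R_rob, R_nat, e_plus, e_minus; ring. Qed.

Theorem corollary6p3 (mum mup K eps th_star th_f th_r : R) :
  mum < mup ->
  0 <= eps <= (mup - mum) / 4 ->
  1 < K -> K_le_Bbar (mup - mum) eps K ->
  is_theta_star mum mup K th_star ->
  is_theta_f mum mup K th_f ->
  is_theta_r mum mup K eps th_r ->
  R_bdy mum mup K eps th_f >= R_bdy mum mup K eps th_star /\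
  R_bdy mum mup K eps th_star >= R_bdy mum mup K eps th_r.
Proof.
  intros Hd [He _] HK [_ Hphi] Hs Hf [Hr Hropt].
  assert (Heps : eps * (K + 1) ^ 2 <= (mup - mum) * K)
    by (apply eps_sqr_le_of_le_phi_inv; [lra | lra | lra | assumption]).
  split.
  - apply Rle_ge, R_bdy_theta_star_le; assumption.
  - rewrite !R_bdy_eq; pose proof (Hropt th_star (proj1 Hs)); pose proof (proj2 Hs th_r Hr); lra.
Qed.
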